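(* Let $G=(X,\Sigma,\longrightarrow,X_0)$ and $R=(Z,\Sigma,\longrightarrow,Z_0)$ be automata. If $\Phi$ is a $\Sigma_{ucr}$-simulation from $G$ to $R$ that is uniform w.r.t. $\Sigma_r$, then there exists a $\Sigma_{ucr}$-controllability set from $G$ to $R$.
   Context: An automaton is a 4-tuple $A=(Q,\Sigma,\longrightarrow,Q_0)$ with state set $Q$, finite event set $\Sigma$, ${\longrightarrow}\subseteq Q\times\Sigma\times Q$ and $\emptyset\neq Q_0\subseteq Q$; write $q\xrightarrow{\sigma}q'$ for $(q,\sigma,q')\in{\longrightarrow}$, $q\xrightarrow{\sigma}$ if some such $q'$ exists, extended to strings. A state $q$ is $s$-reachable ($s\in\Sigma^*$) if $q_0\xrightarrow{s}q$ for some initial $q_0$. Events are partitioned into uncontrollable $\Sigma_{uc}$ and controllable $\Sigma_c$; $\Sigma_r\subseteq\Sigma$ is a fixed set of required events. $\Phi\subseteq X\times Z$ is a $\Sigma_{ucr}$-simulation from $G$ to $R$ if (initial state) every $x_0\in X_0$ has $z_0\in Z_0$ with $(x_0,z_0)\in\Phi$; ($\Sigma_{uc}$-forward) for $(x,z)\in\Phi$, $\sigma\in\Sigma_{uc}$, $x\xrightarrow{\sigma}x'$ there is $z'$ with $z\xrightarrow{\sigma}z'$, $(x',z')\in\Phi$; ($\Sigma_r$-backward) for $(x,z)\in\Phi$, $\sigma\in\Sigma_r$, $z\xrightarrow{\sigma}z'$ there is $x'$ with $x\xrightarrow{\sigma}x'$, $(x',z')\in\Phi$. Such $\Phi$ is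 uniform w.r.t. $\Sigma_r$ if for any $(x_1,z_1),(x_2,z_2)\in\Phi$ such that, for some $s\in\Sigma^*$, $x_1,x_2$ are $s$-reachable in $G$ and $z_1,z_2$ are $s$-reachable in $R$: for all $\sigma\in\Sigma_r$ and $x_2'$, if $z_1\xrightarrow{\sigma}$ and $x_2\xrightarrow{\sigma}x_2'$ then there is $z_2'$ with $z_2\xrightarrow{\sigma}z_2'$ and $(x_2',z_2')\in\Phi$. For $W,W'\subseteq X\times Z$: $\mathit{match}_{G,R}(W,\sigma,W')$ iff for all $(x,z)\in W$ and $x\xrightarrow{\sigma}x'$ there is $z'$ with $z\xrightarrow{\sigma}z'$ and $(x',z')\in W'$. $E\subseteq\wp(X\times Z)$ is a $\Sigma_{ucr}$-controllability set from $G$ to $R$ if: (istate) some $W_0\in E$ satisfies $\forall x_0\in X_0\,\exists z_0\in Z_0\,((x_0,z_0)\in W_0)$; (a) for every $W\in E$, $\sigma\in\Sigma_{uc}$ there is $W'\in E$ with $\mathit{match}_{G,R}(W,\sigma,W')$; (b) for every $W\in E$, $(x,z)\in W$, $\sigma\in\Sigma_r$, $z\xrightarrow{\sigma}z'$, there exist $x'$, $W'\in E$ with $x\xrightarrow{\sigma}x'$, $(x',z')\in W'$, $\mathit{match}_{G,R}(W,\sigma,W')$. *)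

From Stdlib Require Import List.

Record automaton (Ev : Type) := Automaton {
  st : Type;
  trans : st -> Ev -> st -> Prop;
  init : st -> Prop;
  init_nonempty : exists q, init q
}.
Arguments st {Ev}.
Arguments trans {Ev}.
Arguments init {Ev}.

Definition finite_events (Ev : Type) : Prop := exists l : list Ev, forall e, In e l.

Inductive trans_str {Ev} (A : automaton Ev) : st A -> list Ev -> st A -> Prop :=
| ts_nil : forall q, trans_str A q nil q
| ts_cons : forall q q' q'' e s,
    trans A q e q' -> trans_str A q' s q'' -> trans_str A q (e :: s) q''.

Definition reachable {Ev} (A : automaton Ev) (s : list Ev) (q : st A) : Prop :=
  exists q0, init A q0 /\ trans_str A q0 s q.

Section Sim.
Context {Ev : Type} (Suc Sr : Ev -> Prop) (G R : automaton Ev).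

Definition ucr_simulation (Phi : st G -> st R -> Prop) : Prop :=
  (forall x0, init G x0 -> exists z0, init R z0 /\ Phi x0 z0) /\
  (forall x z e x', Phi x z -> Suc e -> trans G x e x' ->
     exists z', trans R z e z' /\ Phi x' z') /\
  (forall x z e z', Phi x z -> Sr e -> trans R z e z' ->
     exists x', trans G x e x' /\ Phi x' z').

Definition uniform (Phi : st G -> st R -> Prop) : Prop :=
  forall x1 z1 x2 z2 (s : list Ev),
    Phi x1 z1 -> Phi x2 z2 ->
    reachable G s x1 -> reachable G s x2 ->
    reachable R s z1 -> reachable R s z2 ->
    forall e x2', Sr e -> (exists z1', trans R z1 e z1') -> trans G x2 e x2' ->
      exists z2', trans R z2 e z2' /\ Phi x2' z2'.

Definition match_ (W : st G -> st R -> Prop) (e : Ev) (W' : st G -> st R -> Prop) : Prop :=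
  forall x z x', W x z -> trans G x e x' -> exists z', trans R z e z' /\ W' x' z'.

Definition controllability_set (E : (st G -> st R -> Prop) -> Prop) : Prop :=
  (exists W0, E W0 /\ forall x0, init G x0 -> exists z0, init R z0 /\ W0 x0 z0) /\
  (forall W e, E W -> Suc e -> exists W', E W' /\ match_ W e W') /\
  (forall W x z e z', E W -> W x z -> Sr e -> trans R z e z' ->
     exists x' W', trans G x e x' /\ E W' /\ W' x' z' /\ match_ W e W').
End Sim.

(** The controllability set consists of the restrictions of [Phi] to the
    pairs [(x, z)] that are reachable by one and the same string [s] in [G]
    and in [R].  Extending [s] by an event keeps both components reachable,
    so the forward and backward clauses of the simulation carry over
    directly.  The only delicate clause is [match] for a required event [e]:
    a pair [(x, z)] of the class of [s] with [z -e->] forces, by uniformity,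
    every other pair of the same class to match every [e]-move of [G]. *)

From Stdlib Require Import List.
Import ListNotations.

Lemma trans_str_snoc {Ev} (A : automaton Ev) q s q' e q'' :
  trans_str A q s q' -> trans A q' e q'' -> trans_str A q (s ++ [e]) q''.
Proof.
  induction 1 as [q | q q1 q2 e' s Hstep Hs IH]; intros Hlast; simpl.
  - econstructor; [exact Hlast | constructor].
  - econstructor; [exact Hstep | auto].
Qed.

Lemma reachable_snoc {Ev} (A : automaton Ev) s q e q' :
  reachable A s q -> trans A q e q' -> reachable A (s ++ [e]) q'.
Proof.
  intros [q0 [Hinit Hs]] Hstep.
  exists q0; split; [exact Hinit | eapply trans_str_snoc; eauto].
Qed.

Lemma reachable_nil {Ev} (A : automaton Ev) q : init A q -> reachable A [] q.
Proof. intros Hq; exists q; split; [exact Hq | constructor]. Qed.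

Section SimulationClasses.
Context {Ev : Type} (Suc Sr : Ev -> Prop) (G R : automaton Ev).
Variable Phi : st G -> st R -> Prop.

Definition simulation_class (s : list Ev) (x : st G) (z : st R) : Prop :=
  Phi x z /\ reachable G s x /\ reachable R s z.

Lemma simulation_class_snoc s x z e x' z' :
  simulation_class s x z -> Phi x' z' -> trans G x e x' -> trans R z e z' ->
  simulation_class (s ++ [e]) x' z'.
Proof.
  intros [_ [Hx Hz]] Hphi Hx' Hz'.
  repeat split; [exact Hphi | eapply reachable_snoc; eauto ..].
Qed.

Lemma simulation_class_nil_init :
  (forall x0, init G x0 -> exists z0, init R z0 /\ Phi x0 z0) ->
  forall x0, init G x0 -> exists z0, init R z0 /\ simulation_class [] x0 z0.
Proof.
  intros Hinit x0 Hx0.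
  destruct (Hinit x0 Hx0) as [z0 [Hz0 Hphi]].
  exists z0; repeat split; auto using reachable_nil.
Qed.

Lemma simulation_class_match_uc s e :
  ucr_simulation Suc Sr G R Phi -> Suc e ->
  match_ G R (simulation_class s) e (simulation_class (s ++ [e])).
Proof.
  intros [_ [Hfwd _]] He x z x' Hxz Hx'.
  destruct (Hfwd x z e x' (proj1 Hxz) He Hx') as [z' [Hz' Hphi]].
  exists z'; split; [exact Hz' | eapply simulation_class_snoc; eauto].
Qed.

Lemma simulation_class_backward s x z e z' :
  ucr_simulation Suc Sr G R Phi -> simulation_class s x z -> Sr e ->
  trans R z e z' ->
  exists x', trans G x e x' /\ simulation_class (s ++ [e]) x' z'.
Proof.
  intros [_ [_ Hbwd]] Hxz He Hz'.
  destruct (Hbwd x z e z' (proj1 Hxz) He Hz') as [x' [Hx' Hphi]].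
  exists x'; split; [exact Hx' | eapply simulation_class_snoc; eauto].
Qed.

Lemma simulation_class_match_r s x z e z' :
  uniform Sr G R Phi -> simulation_class s x z -> Sr e -> trans R z e z' ->
  match_ G R (simulation_class s) e (simulation_class (s ++ [e])).
Proof.
  intros Hunif [Hphi [Hx Hz]] He Hz' x2 z2 x2' Hxz2 Hx2'.
  pose proof Hxz2 as [Hphi2 [Hx2 Hz2]].
  destruct (Hunif x z x2 z2 s Hphi Hphi2 Hx Hx2 Hz Hz2 e x2' He
              (ex_intro _ z' Hz') Hx2') as [z2' [Hz2' Hphi2']].
  exists z2'; split; [exact Hz2' | eapply simulation_class_snoc; eauto].
Qed.

End SimulationClasses.

Arguments simulation_class {Ev G R} Phi s x z.

Theorem lemma5 (Ev : Type) (Hfin : finite_events Ev)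
  (Suc Sr : Ev -> Prop) (G R : automaton Ev)
  (Phi : st G -> st R -> Prop) :
  ucr_simulation Suc Sr G R Phi -> uniform Sr G R Phi ->
  exists E, controllability_set Suc Sr G R E.
Proof.
  intros Hsim Hunif.
  exists (fun W => exists s, W = simulation_class Phi s).
  split; [| split].
  - exists (simulation_class Phi []); split; [now exists [] |].
    apply simulation_class_nil_init, (proj1 Hsim).
  - intros W e [s ->] He.
    exists (simulation_class Phi (s ++ [e])); split; [now exists (s ++ [e]) |].
    exact (simulation_class_match_uc Suc Sr G R Phi s e Hsim He).
  - intros W x z e z' [s ->] Hxz He Hz'.
    destruct (simulation_class_backward Suc Sr G R Phi s x z e z' Hsim Hxz He Hz')
      as [x' [Hx' Hxz']].
    exists x', (simulation_class Phi (s ++ [e])).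
    split; [exact Hx' |]; split; [now exists (s ++ [e]) |].
    split; [exact Hxz' |].
    now apply (simulation_class_match_r Sr G R Phi s x z e z').
Qed.
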